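(* Let $G$ be a finite non-solvable group and let $p$ be a fixed prime divisor of $|G|$. Then $G$ has a non-nilpotent maximal subgroup whose order is divisible by $p$. *)

From mathcomp Require Import all_boot all_fingroup all_solvable.

From mathcomp Require Import all_boot all_fingroup all_solvable ssralg.

(** The proof goes by induction on |G|. A nontrivial solvable normal subgroup N
  lets us work in G/N with the prime p if it divides |G/N|, and with any prime
  otherwise: then p divides |N|, which divides the order of every preimage. So
  let G have no nontrivial solvable normal subgroup and suppose every maximal
  subgroup of order divisible by p is nilpotent. Then the normalizer of any
  nontrivial p-subgroup is a proper subgroup of order divisible by p, hence
  nilpotent; this forces distinct Sylow p-subgroups to meet trivially, so
  N_G(P) controls p-fusion. Take a perfect non-solvable normal subgroup L. If
  p divided |L|, then, fusion in S = L :&: P being controlled by S, the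
  transfer of L into S/S' would send u in S to u^|L:S| mod S', which is
  nontrivial for u outside S'; this contradicts L' = L. So L is a p'-group; by
  the Frattini argument the normalizer in G of each Sylow subgroup R of L
  contains a Sylow p-subgroup of G, so it is nilpotent and R centralizes a
  conjugate of P. Hence L centralizes P and lies in the nilpotent group
  N_G(P), which is absurd. *)

Set Implicit Arguments.
Unset Strict Implicit.
Unset Printing Implicit Defensive.

Import GRing.Theory.
Local Open Scope group_scope.

Section ControlledFusion.

Variables (gT : finGroupType) (p : nat) (L S : {group gT}).
Hypothesis sylS : p.-Sylow(L) S.
Hypothesis fusS : forall x u, x \in L -> u \in S -> u ^ x \in S ->
  exists2 s, s \in S & u ^ x = u ^ s.

Let sSL : S \subset L := pHall_sub sylS.
Let nSS' : S \subset 'N(S^`(1)) := normal_norm (der_normal 1 S).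
Let alpha := restrm nSS' (coset S^`(1)).

Let abelA : abelian (alpha @* S).
Proof. by rewrite morphim_restrm setIid der_abelian. Qed.

Let fmalpha := FiniteModule.fmod abelA \o alpha.

Lemma transfer_controlled_fusion u :
  u \in S -> transfer L abelA u = (fmalpha u *+ #|L : S|)%R.
Proof.
move=> Su; have Lu := subsetP sSL u Su.
pose X := transversal (rcosets S L :* <[u]>) L.
have trX : is_transversal X (rcosets S L :* <[u]>) L.
  exact: transversalP (rcosets_cycle_partition sSL Lu).
rewrite (transfer_cycle_expansion sSL abelA Lu trX).
rewrite -(sum_index_rcosets_cycle sSL Lu trX) -sumrMnr.
apply: eq_bigr => x Xx; set n := #|_ : _|.
have Lx : x \in L := subsetP (transversal_sub trX) x Xx.
have Sw : u ^+ n ^ x^-1 \in S.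
  by have := mulg_exp_card_rcosets S u x; rewrite mem_rcoset conjgE invgK mulgA.
have [s Ss ->] := fusS (groupVr Lx) (groupX n Su) Sw.
rewrite /restrm /= /alpha morphJ ?groupX //.
have cm : commute (alpha (u ^+ n)) (alpha s).
  by apply: (centsP abelA); rewrite mem_morphim ?groupX.
rewrite conjgE cm mulKg.
by rewrite /alpha morphX // FiniteModule.fmodX // mem_morphim.
Qed.

Lemma controlled_fusion_not_perfect : S :!=: 1 -> L^`(1) != L.
Proof.
move=> ntS; apply/eqP=> perL.
have pS := pHall_pgroup sylS.
have [_ [u Su S'u]] := properP (sol_der1_proper (pgroup_sol pS) (subxx S) ntS).
have Lu := subsetP sSL u Su.
have : u \in 'ker (transfer_morphism L abelA).
  apply: subsetP Lu; rewrite -{1}perL ker_trivg_morphim der_sub /= morphim_der //.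
  suff abT : abelian (transfer_morphism L abelA @* L) by rewrite (derG1P abT).
  by apply/centsP => a _ b _; apply: addrC.
move/mker; rewrite /= transfer_controlled_fusion // => /(congr1 val).
rewrite FiniteModule.fmvalZ FiniteModule.fmodK ?mem_morphim //.
move/eqP; rewrite -order_dvdn => ord_alpha_u.
have ord_S : #[alpha u] %| #|S| := dvdn_trans (morph_order _ Su) (order_dvdG Su).
have [_ _ p'iS] := and3P sylS.
have : coprime #[alpha u] #[alpha u].
  exact: coprime_dvdr ord_alpha_u (coprime_dvdl ord_S (pnat_coprime pS p'iS)).
rewrite /coprime gcdnn order_eq1 => /eqP alpha_u1.
by case/negP: S'u; apply: coset_idr; [apply: subsetP nSS' u Su | exact: alpha_u1].
Qed.

End ControlledFusion.

Lemma nilpotent_Sylow_conj (gT : finGroupType) (p : nat) (K S : {group gT}) x u :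
  nilpotent K -> p.-Sylow(K) S -> x \in K -> u \in S ->
  exists2 s, s \in S & u ^ x = u ^ s.
Proof.
move=> nilK sylS Kx Su; have defS := nilpotent_Hall_pcore nilK sylS.
have [_ defK cSS' _] := dprodP (nilpotent_pcoreC p nilK).
rewrite -defK -defS in Kx; rewrite -defS in cSS'.
case/mulsgP: Kx => s k Ss S'k ->.
exists s => //; rewrite conjgM; apply/conjg_fixP/commgP/esym.
by apply: (centsP cSS') => //; apply: groupJ.
Qed.

Lemma Sylows_sub (gT : finGroupType) (L H : {group gT}) :
  (forall r, exists2 R : {group gT}, r.-Sylow(L) R & R \subset H) ->
  L \subset H.
Proof.
move=> sylH; apply/setIidPl/eqP; rewrite eqEcard subsetIl dvdn_leq //.
apply/dvdn_partP => [|r _]; first exact: cardG_gt0.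
have [R sylR sRH] := sylH r.
by rewrite -(card_Hall sylR) cardSg // subsetI (pHall_sub sylR).
Qed.

Lemma ntrivg_Sylow (gT : finGroupType) (p : nat) (G P : {group gT}) :
  prime p -> p %| #|G| -> p.-Sylow(G) P -> P :!=: 1.
Proof.
move=> pr_p pG sylP.
by rewrite -cardG_gt1 (card_Hall sylP) p_part_gt1 mem_primes pr_p cardG_gt0.
Qed.

Lemma perfect_normal_exists (gT : finGroupType) (G : {group gT}) :
  ~~ solvable G -> exists L : {group gT}, [/\ L <| G, ~~ solvable L & L^`(1) = L].
Proof.
move=> nsolG; pose nsol_normal := [pred N : {group gT} | (N <| G) && ~~ solvable N].
have [|L /mingroupP[/andP[nLG nsolL] minL] _] := @mingroup_exists _ nsol_normal G.
  by rewrite /= normal_refl.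
exists L; split=> //; apply: minL (der_sub 1 L).
rewrite /= (char_normal_trans (der_char 1 L) nLG); apply: contra nsolL => solL'.
by rewrite (series_sol (der_normal 1 L)) solL' abelian_sol ?(der_abelian 0 L).
Qed.

Lemma Frattini_Sylow_p' (gT : finGroupType) (p r : nat) (G L R : {group gT}) :
  L <| G -> p^'.-group L -> r.-Sylow(L) R ->
  exists2 P : {group gT}, p.-Sylow(G) P & P \subset 'N_G(R).
Proof.
move=> nLG p'L sylR; have [P sylP] := Sylow_exists p 'N_G(R).
exists P; last exact: pHall_sub sylP.
rewrite pHallE (subset_trans (pHall_sub sylP) (subsetIl _ _)) (card_Hall sylP).
have := mul_cardG L 'N_G(R)%G; rewrite /= (Frattini_arg nLG sylR).
move/(congr1 (partn^~ p)).
rewrite !partnM ?cardG_gt0 // (part_p'nat p'L).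
by rewrite (part_p'nat (pnat_dvd (cardSg (subsetIl _ _)) p'L)) mul1n muln1 => ->.
Qed.

Lemma maximal_cosetpre (gT : finGroupType) (G N : {group gT})
    (M : {group coset_of N}) :
  N <| G -> maximal M (G / N) -> maximal (coset N @*^-1 M) G.
Proof.
move=> nNG maxM; have sMG : coset N @*^-1 M \subset G.
  by rewrite -(quotientGK nNG) cosetpreSK (proper_sub (maxgroupp maxM)).
by rewrite -(quotient_maximal (normalS (sub_cosetpre M) sMG nNG) nNG) cosetpreK.
Qed.

Section TrivialSolvableRadical.

Variables (gT : finGroupType) (G : {group gT}) (p : nat).
Hypotheses (pr_p : prime p) (pG : p %| #|G|).
Hypothesis solvable_normal1 :
  forall N : {group gT}, N <| G -> solvable N -> N :=: 1.
Hypothesis maximal_nil :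
  forall M : {group gT}, maximal M G -> p %| #|M| -> nilpotent M.

Lemma proper_nil (K : {group gT}) : K \proper G -> p %| #|K| -> nilpotent K.
Proof.
move=> ltKG pK; have [eKG | [M maxM sKM]] := maximal_exists (proper_sub ltKG).
  by rewrite eKG properxx in ltKG.
exact: nilpotentS sKM (maximal_nil maxM (dvdn_trans pK (cardSg sKM))).
Qed.

Lemma solvable_norm_proper (Q : {group gT}) :
  solvable Q -> Q \subset G -> Q :!=: 1 -> 'N_G(Q) \proper G.
Proof.
move=> solQ sQG ntQ; rewrite properEneq subsetIl andbT.
apply: contra ntQ => /eqP eNG; apply/eqP/solvable_normal1 => //.
by rewrite /normal sQG -eNG subsetIr.
Qed.

Lemma pgroup_norm_nil (Q : {group gT}) :
  p.-group Q -> Q \subset G -> Q :!=: 1 -> nilpotent 'N_G(Q).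
Proof.
move=> pQ sQG ntQ.
apply: proper_nil (solvable_norm_proper (pgroup_sol pQ) sQG ntQ) _.
have [_ pQ' _] := pgroup_pdiv pQ ntQ.
by apply: dvdn_trans pQ' (cardSg _); rewrite subsetI sQG normG.
Qed.

Lemma Sylow_norm_nil (P : {group gT}) : p.-Sylow(G) P -> nilpotent 'N_G(P).
Proof.
move=> sylP; apply: pgroup_norm_nil (pHall_pgroup sylP) (pHall_sub sylP) _.
exact: ntrivg_Sylow sylP.
Qed.

Lemma Sylow_enlarging_meets (D : {group gT}) :
    p.-group D -> D \subset G -> D :!=: 1 ->
  exists2 P3 : {group gT}, p.-Sylow(G) P3 &
    forall P : {group gT}, p.-Sylow(G) P -> D \proper P -> D \proper P3 :&: P.
Proof.
move=> pD sDG ntD; have nilN := pgroup_norm_nil pD sDG ntD.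
(* P3 contains O_p(N_G(D)), hence every N_P(D), which is larger than D. *)
have sNpG : 'O_p('N_G(D)) \subset G := subset_trans (pcore_sub p _) (subsetIl _ _).
have [P3 sylP3 sNpP3] := Sylow_superset sNpG (pcore_pgroup p 'N_G(D)).
exists P3 => // P sylP ltDP; have pP := pHall_pgroup sylP.
apply: proper_sub_trans (nilpotent_proper_norm (pgroup_nil pP) ltDP) _.
rewrite subsetI subsetIl andbT; apply: subset_trans sNpP3.
rewrite sub_Hall_pcore ?(nilpotent_pcore_Hall p nilN) //.
  exact: pgroupS (subsetIl _ _) pP.
by rewrite setSI // (pHall_sub sylP).
Qed.

Lemma Sylow_TI (P1 P2 : {group gT}) :
  p.-Sylow(G) P1 -> p.-Sylow(G) P2 -> P1 :&: P2 != 1 -> P1 :=: P2.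
Proof.
have [n] := ubnP (#|P1| - #|P1 :&: P2|).
elim: n P1 P2 => // n IHn P1 P2 /ltnSE le_n syl1 syl2 ntD.
have oP2 : #|P2| = #|P1| by rewrite (card_Hall syl1) (card_Hall syl2).
have [eD1 | ltD1] := eqVproper (subsetIl P1 P2).
  by apply/eqP; rewrite eqEcard oP2 leqnn andbT -eD1 subsetIr.
have ltD2 : P1 :&: P2 \proper P2 by rewrite properEcard subsetIr oP2 proper_card.
have pD := pgroupS (subsetIl P1 P2) (pHall_pgroup syl1).
have sDG := subset_trans (subsetIl P1 P2) (pHall_sub syl1).
have [P3 syl3 grow] := Sylow_enlarging_meets pD sDG ntD.
have eq3 (P : {group gT}) : p.-Sylow(G) P -> P1 :&: P2 \proper P -> P3 :=: P.
  move=> sylP ltDP; have ltD3 := grow P sylP ltDP.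
  apply: (IHn _ _ _ syl3 sylP).
    rewrite (card_Hall syl3) -(card_Hall syl1).
    exact: leq_trans (ltn_sub2l (proper_card ltD1) (proper_card ltD3)) le_n.
  by rewrite -cardG_gt1 (ltn_trans _ (proper_card ltD3)) ?cardG_gt1.
by rewrite -(eq3 _ syl1 ltD1) (eq3 _ syl2 ltD2).
Qed.

Lemma Sylow_fusion_norm (P : {group gT}) x u :
  p.-Sylow(G) P -> x \in G -> u \in P -> u != 1 -> u ^ x \in P -> x \in 'N(P).
Proof.
move=> sylP Gx Pu ntu Pux; apply/normP/esym/Sylow_TI; rewrite ?pHallJ //.
apply/trivgPn; exists (u ^ x); last by rewrite conjg_eq1.
by rewrite inE Pux memJ_conjg Pu.
Qed.

Lemma perfect_normal_p'group (L : {group gT}) :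
  L <| G -> L^`(1) = L -> p^'.-group L.
Proof.
move=> nLG perL; have [P sylP] := Sylow_exists p G.
rewrite /pgroup p'natE //; apply/negP => pL.
have sylS := Sylow_setI_normal nLG sylP.
have sSP : L :&: P \subset P := subsetIr L P.
have nilN : nilpotent 'N_L(P).
  exact: nilpotentS (setSI _ (normal_sub nLG)) (Sylow_norm_nil sylP).
have sylSN : p.-Sylow('N_L(P)) (L :&: P).
  apply: pHall_subl sylS; last exact: subsetIl.
  by rewrite subsetI subsetIl (subset_trans sSP) ?normG.
suff fusS : forall x u, x \in L -> u \in L :&: P -> u ^ x \in L :&: P ->
    exists2 s, s \in L :&: P & u ^ x = u ^ s.
  have ntS := ntrivg_Sylow pr_p pL sylS.
  by have := controlled_fusion_not_perfect sylS fusS ntS; rewrite perL eqxx.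
move=> x u Lx Su Sux; have [-> | ntu] := eqVneq u 1.
  by exists 1; rewrite ?group1 ?conj1g.
have Gx := subsetP (normal_sub nLG) x Lx.
have NPx := Sylow_fusion_norm sylP Gx (subsetP sSP u Su) ntu (subsetP sSP _ Sux).
by apply: nilpotent_Sylow_conj nilN sylSN _ Su; rewrite inE Lx.
Qed.

Lemma p'group_normal_Sylow_cent (L P : {group gT}) r :
  L <| G -> p^'.-group L -> p.-Sylow(G) P ->
  exists2 R : {group gT}, r.-Sylow(L) R & R \subset 'C(P).
Proof.
move=> nLG p'L sylP; have [R sylR] := Sylow_exists r L.
have [R1 | ntR] := eqVneq (R : {set gT}) 1; first by exists R; rewrite // R1 sub1G.
have sRG := subset_trans (pHall_sub sylR) (normal_sub nLG).
have [P0 sylP0 sP0N] := Frattini_Sylow_p' nLG p'L sylR.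
have [_ pP0 _] := pgroup_pdiv (pHall_pgroup sylP0) (ntrivg_Sylow pr_p pG sylP0).
have pN := dvdn_trans pP0 (cardSg sP0N).
have ltNG := solvable_norm_proper (pgroup_sol (pHall_pgroup sylR)) sRG ntR.
have nilN := proper_nil ltNG pN.
have cP0R : R \subset 'C(P0).
  apply: sub_nilpotent_cent2 nilN sP0N _ _; first by rewrite subsetI sRG normG.
  exact: pnat_coprime (pHall_pgroup sylP0) (pgroupS (pHall_sub sylR) p'L).
have [g Gg defP0] := Sylow_trans sylP sylP0.
exists (R :^ g^-1)%G.
  by rewrite pHallJnorm // groupV (subsetP (normal_norm nLG)).
by rewrite sub_conjgV -centJ -defP0.
Qed.

Lemma trivial_radical_solvable : solvable G.
Proof.
apply: contraT => nsolG; have [L [nLG nsolL perL]] := perfect_normal_exists nsolG.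
have p'L := perfect_normal_p'group nLG perL.
have [P sylP] := Sylow_exists p G.
have cLP : L \subset 'C(P).
  by apply: Sylows_sub => r; apply: p'group_normal_Sylow_cent nLG p'L sylP.
case/negP: nsolL; apply: nilpotent_sol (nilpotentS _ (Sylow_norm_nil sylP)).
by rewrite subsetI (normal_sub nLG) (subset_trans cLP (cent_sub P)).
Qed.

End TrivialSolvableRadical.

Lemma trivial_radical_nonnil_maximal (gT : finGroupType) (G : {group gT})
    (p : nat) :
  ~~ solvable G -> prime p -> p %| #|G| ->
  (forall N : {group gT}, N <| G -> solvable N -> N :=: 1) ->
  exists M : {group gT}, [/\ maximal M G, ~~ nilpotent M & p %| #|M|].
Proof.
move=> nsolG pr_p pG rad1.
have [M /and3P[maxM nnilM pM] | noM] :=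
  pickP [pred M : {group gT} | [&& maximal M G, ~~ nilpotent M & p %| #|M|]].
  by exists M.
case/negP: nsolG; apply: trivial_radical_solvable pr_p pG rad1 _ => M maxM pM.
by apply: contraFT (noM M) => nnilM; rewrite /= maxM nnilM.
Qed.

Theorem theorem1p1 (gT : finGroupType) (G : {group gT}) (p : nat) :
  ~~ solvable G -> prime p -> p %| #|G| ->
  exists M : {group gT}, [/\ maximal M G, ~~ nilpotent M & p %| #|M|].
Proof.
have [n] := ubnP #|G|; elim: n gT G p => // n IHn gT G p /ltnSE-leGn nsolG pr_p pG.
have [N /and3P[nNG solN ntN] | rad1] :=
  pickP [pred N : {group gT} | [&& N <| G, solvable N & N :!=: 1]]; last first.
  apply: trivial_radical_nonnil_maximal => // N nNG solN.
  by apply/eqP; apply: contraFT (rad1 N) => ntN; rewrite /= nNG solN.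
have nsolGN : ~~ solvable (G / N) by rewrite (series_sol nNG) solN in nsolG.
have ltGN : #|G / N| < n := leq_trans (ltn_quotient ntN (normal_sub nNG)) leGn.
have oG : #|G| = (#|N| * #|G / N|)%N by rewrite -card_cosetpre quotientGK.
have [M [maxM nnilM pM]] : exists M : {group coset_of N},
    [/\ maximal M (G / N), ~~ nilpotent M & p %| #|N| * #|M|]%N.
  have [pGN | p'GN] := boolP (p %| #|G / N|).
    have [M [maxM nnilM pM]] := IHn _ _ p ltGN nsolGN pr_p pGN.
    by exists M; rewrite dvdn_mull.
  have ntGN : 1 < #|G / N|.
    by rewrite cardG_gt1; apply: contra nsolGN => /eqP ->; apply: solvable1.
  have [M [maxM nnilM _]] := IHn _ _ _ ltGN nsolGN (pdiv_prime ntGN) (pdiv_dvd _).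
  exists M; rewrite dvdn_mulr //.
  by move: pG; rewrite oG Euclid_dvdM // (negbTE p'GN) orbF.
exists (coset N @*^-1 M)%G; split; first exact: maximal_cosetpre.
  by apply: contra nnilM => /(quotient_nil N); rewrite cosetpreK.
by rewrite card_cosetpre.
Qed.
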